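(* Let $\tau$ be a $T_1$-topology on $\mathcal{C}(p,q)$ such that $(\mathcal{C}(p,q),\tau)$ is a semitopological semigroup and the maps $\mathcal{C}(p,q)\to E(\mathcal{C}(p,q))$, $x\mapsto xx^{-1}$ and $x\mapsto x^{-1}x$, are continuous. If there exists an idempotent $q^ip^i\in\mathcal{C}(p,q)$ such that the subspace $E(\mathcal{C}(p,q))$ is semiregular at $q^ip^i$, then $\tau$ is discrete.
   Context: The bicyclic monoid $\mathcal{C}(p,q)$ is the monoid generated by $p,q$ subject only to $pq=1$; elements are uniquely $q^ip^j$, $i,j\in\omega$, with multiplication $q^kp^l\cdot q^mp^n = q^{k-l+m}p^n$ if $l<m$, $=q^kp^n$ if $l=m$, $=q^kp^{l-m+n}$ if $l>m$, and inversion $(q^ip^j)^{-1}=q^jp^i$. $E(\mathcal{C}(p,q))=\{q^ip^i:i\in\omega\}$ with the subspace topology. Semitopological semigroup: multiplication separately continuous. A subspace $Y$ is semiregular at $x\in Y$ if $x$ has a neighbourhood base in $Y$ consisting of sets $U$ with $U=\mathrm{int}_Y(\mathrm{cl}_Y(U))$. *)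

From Stdlib Require Import Arith.

(* The bicyclic monoid C(p,q): the element q^i p^j is encoded as (i, j). *)
Definition bicyclic : Type := (nat * nat)%type.

Definition bmul (x y : bicyclic) : bicyclic :=
  let (k, l) := x in let (m, n) := y in
  if l <? m then (k + (m - l), n)
  else if l =? m then (k, n)
  else (k, l - m + n).

Definition binv (x : bicyclic) : bicyclic := let (i, j) := x in (j, i).

Definition idem (x : bicyclic) : Prop := fst x = snd x.

Definition is_topology {X : Type} (O : (X -> Prop) -> Prop) : Prop :=
  O (fun _ => True) /\ O (fun _ => False) /\
  (forall U V, O U -> O V -> O (fun x => U x /\ V x)) /\
  (forall F : (X -> Prop) -> Prop, (forall U, F U -> O U) ->
     O (fun x => exists U, F U /\ U x)).

Definition T1 {X : Type} (O : (X -> Prop) -> Prop) : Prop :=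
  forall x y : X, x <> y -> exists U, O U /\ U x /\ ~ U y.

Definition continuous {X : Type} (O : (X -> Prop) -> Prop) (f : X -> X) : Prop :=
  forall V, O V -> O (fun x => V (f x)).

Definition semitopological {X : Type} (O : (X -> Prop) -> Prop)
  (mul : X -> X -> X) : Prop :=
  forall a, continuous O (mul a) /\ continuous O (fun x => mul x a).

Definition sub_open {X : Type} (O : (X -> Prop) -> Prop) (Y W : X -> Prop) : Prop :=
  exists V, O V /\ forall z, W z <-> (V z /\ Y z).

Definition continuous_into {X : Type} (O : (X -> Prop) -> Prop) (Y : X -> Prop)
  (f : X -> X) : Prop :=
  (forall x, Y (f x)) /\ forall W, sub_open O Y W -> O (fun x => W (f x)).

Definition sub_closure {X : Type} (O : (X -> Prop) -> Prop) (Y U : X -> Prop)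
  : X -> Prop :=
  fun z => Y z /\ forall W, sub_open O Y W -> W z -> exists w, W w /\ U w.

Definition sub_interior {X : Type} (O : (X -> Prop) -> Prop) (Y A : X -> Prop)
  : X -> Prop :=
  fun z => exists W, sub_open O Y W /\ W z /\ (forall w, W w -> A w).

Definition semiregular_at {X : Type} (O : (X -> Prop) -> Prop) (Y : X -> Prop)
  (x : X) : Prop :=
  Y x /\
  forall W, sub_open O Y W -> W x ->
    exists U, sub_open O Y U /\ U x /\ (forall z, U z -> W z) /\
      (forall z, U z <-> sub_interior O Y (sub_closure O Y U) z).

Definition discrete {X : Type} (O : (X -> Prop) -> Prop) : Prop :=
  forall U : X -> Prop, O U.

(* Semiregularity of E at one idempotent together with T1 yields two open sets
   whose traces on E are disjoint; translating one of them by an idempotent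
   gives an open set meeting E in a finite nonempty set, and T1 isolates one
   idempotent (j,j) in E.  Since x x^-1 and x^-1 x are continuous into E,
   the point (j,j) is then open, and by the two-sided translation
   x |-> (j,0) x (0,j) so is the identity (0,0).  The preimage of (0,0)
   under x |-> (0,k) x (k,0) meets E in {(a,a) : a <= k}, so every idempotent
   is isolated in E, and continuity of x x^-1, x^-1 x again makes every point
   (k,l) open. *)
From Stdlib Require Import Arith Lia FunctionalExtensionality PropExtensionality Classical.

Section Topology.

Variables (X : Type) (O : (X -> Prop) -> Prop).

Lemma open_ext (U V : X -> Prop) : O U -> (forall x, U x <-> V x) -> O V.
Proof.
  intros HU E. replace V with U; [exact HU|].
  extensionality x. apply propositional_extensionality, E.
Qed.

Hypothesis HO : is_topology O.

Lemma open_full : O (fun _ => True).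
Proof. apply HO. Qed.

Lemma open_inter (U V : X -> Prop) : O U -> O V -> O (fun x => U x /\ V x).
Proof. apply HO. Qed.

Lemma discrete_of_open_points : (forall x, O (fun y => y = x)) -> discrete O.
Proof.
  intros Hpt W. destruct HO as (_ & _ & _ & Hunion).
  eapply open_ext; [apply (Hunion (fun S => exists x, W x /\ S = (fun y => y = x))) |].
  - intros S [x [_ ->]]. apply Hpt.
  - intro x. split.
    + intros [S [[y [Wy ->]] ->]]. exact Wy.
    + intro Wx. exists (fun y => y = x). split; [exists x|]; auto.
Qed.

Lemma continuous_into_open (Y : X -> Prop) (f : X -> X) (V : X -> Prop) :
  continuous_into O Y f -> O V -> O (fun x => V (f x)).
Proof.
  intros [Yf Cf] HV.
  apply (open_ext (fun x => V (f x) /\ Y (f x))).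
  - apply (Cf (fun z => V z /\ Y z)). exists V. split; tauto.
  - intro x. specialize (Yf x). tauto.
Qed.

Lemma semitopological_open_translate (mul : X -> X -> X) (a b : X) (V : X -> Prop) :
  semitopological O mul -> O V -> O (fun x => V (mul a (mul x b))).
Proof.
  intros Hs HV. apply (proj2 (Hs b) (fun y => V (mul a y))), (proj1 (Hs a)), HV.
Qed.

Hypothesis HT1 : T1 O.

Lemma T1_isolate_finite (f : nat -> X) (k : nat) :
  (forall a b, f a = f b -> a = b) ->
  forall m G, O G -> G (f k) -> (forall a, G (f a) -> a = k \/ a < m) ->
  exists G', O G' /\ forall a, G' (f a) <-> a = k.
Proof.
  intros Hf. induction m as [|m IH]; intros G HG Gk HGm.
  - exists G. split; [exact HG|]. intro a. split.
    + intro Ga. destruct (HGm a Ga); [auto | lia].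
    + intros ->. exact Gk.
  - destruct (Nat.eq_dec m k) as [->|Hmk].
    + apply (IH G HG Gk). intros a Ga. destruct (HGm a Ga); lia.
    + destruct (HT1 (f k) (f m)) as [U [HU [Uk nUm]]].
      { intro E. apply Hmk. symmetry. exact (Hf _ _ E). }
      apply (IH (fun x => G x /\ U x)); [apply open_inter; auto | auto |].
      intros a [Ga Ua]. destruct (HGm a Ga) as [|Ha]; [auto|].
      destruct (Nat.eq_dec a m) as [->|]; [contradiction | lia].
Qed.

(* A regular open U with U = int cl U cannot be dense in Y without being all
   of Y, so some point of Y lies outside the closure of U. *)
Lemma semiregular_disjoint_traces (Y : X -> Prop) (x y : X) :
  semiregular_at O Y x -> Y y -> x <> y ->
  exists V1 V2 w, O V1 /\ O V2 /\ V1 x /\ V2 w /\ Y w /\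
    forall z, Y z -> V1 z -> V2 z -> False.
Proof.
  intros [Yx Hsr] Yy Hxy.
  destruct (HT1 x y Hxy) as [V0 [HV0 [V0x nV0y]]].
  destruct (Hsr (fun z => V0 z /\ Y z)) as [U [[V1 [HV1 HU]] [Ux [UV0 Ureg]]]];
    [exists V0; split; tauto | tauto |].
  assert (Hw : exists w, Y w /\ ~ sub_closure O Y U w).
  { apply NNPP. intro Hdense. apply nV0y, UV0, Ureg.
    exists Y. split; [exists (fun _ => True); split; [apply open_full | tauto] |].
    split; [exact Yy|]. intros w Yw. apply NNPP. intro. eauto. }
  destruct Hw as [w [Yw nclw]].
  assert (HW2 : exists W2, sub_open O Y W2 /\ W2 w /\ forall u, W2 u -> ~ U u).
  { apply NNPP. intro HnW. apply nclw. split; [exact Yw|].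
    intros W2 HW2 W2w. apply NNPP. intro Hnu.
    apply HnW. exists W2. repeat split; auto. intros u W2u Uu. eauto. }
  destruct HW2 as [W2 [[V2 [HV2 HW2]] [W2w W2U]]].
  exists V1, V2, w. repeat split; auto.
  - apply HU, Ux.
  - apply HW2, W2w.
  - intros z Yz V1z V2z. apply (W2U z); [apply HW2 | apply HU]; auto.
Qed.

End Topology.

Arguments open_ext {X O}.
Arguments open_inter {X O} HO {U V}.

Ltac bmul_cases :=
  repeat (cbv beta iota zeta; match goal with
  | |- context[?x <? ?y] => destruct (Nat.ltb_spec x y)
  | |- context[?x =? ?y] => destruct (Nat.eqb_spec x y) end); cbv beta iota zeta.

Lemma pair_eq (a b c d : nat) : (a, b) = (c, d) <-> a = c /\ b = d.
Proof. split; [intro E; injection E; auto | intros [-> ->]; reflexivity]. Qed.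

Lemma bmul_binv_r (x : bicyclic) : bmul x (binv x) = (fst x, fst x).
Proof. destruct x as [a b]. unfold bmul, binv. bmul_cases; simpl; f_equal; lia. Qed.

Lemma bmul_binv_l (x : bicyclic) : bmul (binv x) x = (snd x, snd x).
Proof. destruct x as [a b]. unfold bmul, binv. bmul_cases; simpl; f_equal; lia. Qed.

Lemma bmul_idem (a b : nat) : bmul (a, a) (b, b) = (Nat.max a b, Nat.max a b).
Proof. unfold bmul. bmul_cases; f_equal; lia. Qed.

Lemma bmul_conj_eq_idem (j : nat) (x : bicyclic) :
  bmul (j, 0) (bmul x (0, j)) = (j, j) <-> x = (0, 0).
Proof. destruct x as [a b]. unfold bmul. bmul_cases; rewrite ?pair_eq; lia. Qed.

Lemma bmul_conj_idem_eq_one (k a : nat) :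
  bmul (0, k) (bmul (a, a) (k, 0)) = (0, 0) <-> a <= k.
Proof. unfold bmul. bmul_cases; rewrite ?pair_eq; lia. Qed.

Lemma diag_inj (a b : nat) : (a, a) = (b, b) -> a = b.
Proof. intro E. now injection E. Qed.

Section Bicyclic.

Variable O : (bicyclic -> Prop) -> Prop.
Hypotheses (HO : is_topology O) (HT1 : T1 O) (Hs : semitopological O bmul).
Hypotheses (Hc1 : continuous_into O idem (fun x => bmul x (binv x)))
           (Hc2 : continuous_into O idem (fun x => bmul (binv x) x)).

Definition isolated_idem (k : nat) : Prop :=
  exists G, O G /\ forall a, G (a, a) <-> a = k.

Lemma isolated_idem_of_bounded (G : bicyclic -> Prop) (k n : nat) :
  O G -> G (k, k) -> (forall a, G (a, a) -> a <= n) -> isolated_idem k.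
Proof.
  intros HG Gk Hn.
  apply (T1_isolate_finite _ _ HO HT1 (fun a => (a, a)) k diag_inj (S n) G HG Gk).
  intros a Ga. specialize (Hn a Ga). lia.
Qed.

(* Right translation by (v,v) is the identity on idempotents above v, so the
   traces of V1 and of V2 (v,v)^-1 on E meet only below v. *)
Lemma isolated_idem_of_disjoint_traces (V1 V2 : bicyclic -> Prop) (u v : nat) :
  O V1 -> O V2 -> V1 (u, u) -> V2 (v, v) -> u <= v ->
  (forall a, V1 (a, a) -> V2 (a, a) -> False) -> isolated_idem u.
Proof.
  intros HV1 HV2 V1u V2v Huv Hdisj.
  apply (isolated_idem_of_bounded (fun y => V1 y /\ V2 (bmul y (v, v))) u v).
  - apply (open_inter HO); [exact HV1 | apply (proj2 (Hs (v, v))), HV2].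
  - rewrite bmul_idem, Nat.max_r by exact Huv. auto.
  - intros a [V1a V2a]. rewrite bmul_idem in V2a.
    destruct (le_gt_dec a v) as [|Hav]; [assumption|].
    rewrite Nat.max_l in V2a by lia. exfalso. eauto.
Qed.

Lemma isolated_idem_exists (i : nat) :
  semiregular_at O idem (i, i) -> exists j, isolated_idem j.
Proof.
  intro Hsr.
  destruct (semiregular_disjoint_traces _ _ HO HT1 idem (i, i) (S i, S i) Hsr)
    as (V1 & V2 & [v v'] & HV1 & HV2 & V1i & V2v & Hv & Hdisj);
    [reflexivity | intro E; injection E; lia |].
  unfold idem in Hv. simpl in Hv. subst v'.
  assert (Hd : forall a, V1 (a, a) -> V2 (a, a) -> False)
    by (intros a; apply Hdisj; reflexivity).
  destruct (le_ge_dec i v).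
  - exists i. apply (isolated_idem_of_disjoint_traces V1 V2 i v); auto.
  - exists v. apply (isolated_idem_of_disjoint_traces V2 V1 v i); eauto.
Qed.

Lemma open_fst_eq (k : nat) : isolated_idem k -> O (fun x => fst x = k).
Proof.
  intros [G [HG EG]].
  apply (open_ext _ _ (continuous_into_open _ _ _ _ _ Hc1 HG)).
  intro x. rewrite bmul_binv_r. apply EG.
Qed.

Lemma open_snd_eq (l : nat) : isolated_idem l -> O (fun x => snd x = l).
Proof.
  intros [G [HG EG]].
  apply (open_ext _ _ (continuous_into_open _ _ _ _ _ Hc2 HG)).
  intro x. rewrite bmul_binv_l. apply EG.
Qed.

Lemma open_point_of_isolated_idem (k l : nat) :
  isolated_idem k -> isolated_idem l -> O (fun x => x = (k, l)).
Proof.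
  intros Hk Hl.
  apply (open_ext _ _ (open_inter HO (open_fst_eq k Hk) (open_snd_eq l Hl))).
  intros [a b]. simpl. rewrite pair_eq. tauto.
Qed.

Lemma open_one_of_isolated_idem (j : nat) :
  isolated_idem j -> O (fun x => x = (0, 0)).
Proof.
  intro Hj.
  apply (open_ext _ _ (semitopological_open_translate _ _ _ (j, 0) (0, j) _ Hs
                         (open_point_of_isolated_idem j j Hj Hj))).
  intro x. apply bmul_conj_eq_idem.
Qed.

Lemma isolated_idem_of_open_one (k : nat) :
  O (fun x => x = (0, 0)) -> isolated_idem k.
Proof.
  intro H00.
  apply (isolated_idem_of_bounded _ k k
           (semitopological_open_translate _ _ _ (0, k) (k, 0) _ Hs H00)).
  - apply bmul_conj_idem_eq_one. reflexivity.
  - intro a. apply bmul_conj_idem_eq_one.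
Qed.

End Bicyclic.

Theorem proposition5 (O : (bicyclic -> Prop) -> Prop) :
  is_topology O -> T1 O -> semitopological O bmul ->
  continuous_into O idem (fun x => bmul x (binv x)) ->
  continuous_into O idem (fun x => bmul (binv x) x) ->
  (exists i : nat, semiregular_at O idem (i, i)) ->
  discrete O.
Proof.
  intros HO HT1 Hs Hc1 Hc2 [i Hsr].
  destruct (isolated_idem_exists O HO HT1 Hs i Hsr) as [j Hj].
  pose proof (open_one_of_isolated_idem O HO Hs Hc1 Hc2 j Hj) as H00.
  apply (discrete_of_open_points _ _ HO). intros [k l].
  apply (open_point_of_isolated_idem O HO Hc1 Hc2);
    apply (isolated_idem_of_open_one O HO HT1 Hs); exact H00.
Qed.
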